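(* Let $m$ be a positive integer and $\gamma\in C^m(\mathbb{R},\mathbb{R}^3)$. For every $p\in\mathbb{H}$ and all $a,b\in\mathbb{R}$, $$A(p*\gamma;a,b)=A(\gamma;a,b)\quad\text{and}\quad V(p*\gamma;a,b)=V(\gamma;a,b),$$ where $p*\gamma$ is the curve $t\mapsto p*\gamma(t)$.
   Context: $\mathbb{H}$ is $\mathbb{R}^3$ with group law $(x,y,z)*(x',y',z')=(x+x',\,y+y',\,z+z'+2(yx'-xy'))$. $C^m(\mathbb{R},\mathbb{R}^3)$: curves whose components are $m$-times continuously differentiable with bounded $m$th derivative. For $\gamma=(f,g,h)\in C^m(\mathbb{R},\mathbb{R}^3)$ and $a\in\mathbb{R}$, $T_af(x)=\sum_{k=0}^m\frac{f^{(k)}(a)}{k!}(x-a)^k$ (similarly $T_ag$), and for $a,b\in\mathbb{R}$: $A(\gamma;a,b)= h(b)-h(a)-2\int_a^b\big((T_af)'T_ag-(T_ag)'T_af\big) + 2f(a)(g(b)-T_ag(b)) - 2g(a)(f(b)-T_af(b))$, $V(\gamma;a,b)=(b-a)^{2m}+(b-a)^m\int_a^b(|(T_af)'|+|(T_ag)'|)$. *)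

From Stdlib Require Import Reals.
From Coquelicot Require Import Coquelicot.
Open Scope R_scope.

Definition hmul (p q : R * R * R) : R * R * R :=
  let '(x, y, z) := p in let '(x', y', z') := q in
  (x + x', y + y', z + z' + 2 * (y * x' - x * y')).

Definition cx (gamma : R -> R * R * R) : R -> R := fun t => fst (fst (gamma t)).
Definition cy (gamma : R -> R * R * R) : R -> R := fun t => snd (fst (gamma t)).
Definition cz (gamma : R -> R * R * R) : R -> R := fun t => snd (gamma t).

Definition Cm_fun (m : nat) (f : R -> R) : Prop :=
  (forall k x, (k <= m)%nat -> ex_derive_n f k x) /\
  (forall x, continuous (Derive_n f m) x) /\
  (exists M, forall x, Rabs (Derive_n f m x) <= M).

Definition Cm_curve (m : nat) (gamma : R -> R * R * R) : Prop :=
  Cm_fun m (cx gamma) /\ Cm_fun m (cy gamma) /\ Cm_fun m (cz gamma).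

Definition taylor (m : nat) (f : R -> R) (a : R) : R -> R :=
  fun x => sum_f_R0 (fun k => Derive_n f k a / INR (Factorial.fact k) * (x - a) ^ k) m.

Definition Aq (m : nat) (gamma : R -> R * R * R) (a b : R) : R :=
  let f := cx gamma in let g := cy gamma in let h := cz gamma in
  let Tf := taylor m f a in let Tg := taylor m g a in
  h b - h a
  - 2 * RInt (fun x => Derive Tf x * Tg x - Derive Tg x * Tf x) a b
  + 2 * f a * (g b - Tg b) - 2 * g a * (f b - Tf b).

Definition Vq (m : nat) (gamma : R -> R * R * R) (a b : R) : R :=
  let Tf := taylor m (cx gamma) a in let Tg := taylor m (cy gamma) a in
  (b - a) ^ (2 * m)
  + (b - a) ^ m * RInt (fun x => Rabs (Derive Tf x) + Rabs (Derive Tg x)) a b.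

Definition htranslate (p : R * R * R) (gamma : R -> R * R * R) : R -> R * R * R :=
  fun t => hmul p (gamma t).

From Stdlib Require Import Reals FunctionalExtensionality.
From Coquelicot Require Import Coquelicot.
Open Scope R_scope.

(* Left translation by p = (x0, y0, z0) replaces f, g by x0 + f, y0 + g and
   h by z0 + h + 2 (y0 f - x0 g).  Adding a constant to a function adds it to
   its Taylor polynomial and leaves the derivative of that polynomial
   unchanged, so V is invariant.  In A the integrand gains y0 T_a f' - x0 T_a g',
   whose integral is y0 (T_a f(b) - f(a)) - x0 (T_a g(b) - g(a)) by the
   fundamental theorem of calculus; this cancels the terms contributed by the
   new h and by the boundary terms. *)

Lemma Derive_const_plus (c : R) (f : R -> R) :
  Derive (fun t => c + f t) = Derive f.
Proof.
  apply functional_extensionality; intros x.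
  unfold Derive; f_equal; apply Lim_ext; intros y; f_equal; ring.
Qed.

Lemma Derive_n_const_plus (c : R) (f : R -> R) (k : nat) :
  Derive_n (fun t => c + f t) (S k) = Derive_n f (S k).
Proof.
  induction k as [|k IH]; simpl.
  - apply Derive_const_plus.
  - simpl in IH; rewrite IH; reflexivity.
Qed.

Lemma taylor_const_plus (m : nat) (c : R) (f : R -> R) (a : R) :
  taylor m (fun t => c + f t) a = fun x => c + taylor m f a x.
Proof.
  apply functional_extensionality; intros x; unfold taylor.
  induction m as [|m IH].
  - simpl; field.
  - rewrite !tech5, IH, Derive_n_const_plus; ring.
Qed.

Lemma taylor_center (m : nat) (f : R -> R) (a : R) : taylor m f a a = f a.
Proof.
  unfold taylor; induction m as [|m IH]; simpl sum_f_R0.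
  - simpl; field.
  - rewrite IH, Rminus_diag; simpl; ring.
Qed.

Lemma continuous_sum_f_R0 (F : nat -> R -> R) (n : nat) (x : R) :
  (forall k, continuous (F k) x) ->
  continuous (fun t => sum_f_R0 (fun k => F k t) n) x.
Proof.
  intros HF; induction n as [|n IH]; simpl.
  - apply HF.
  - apply (continuous_plus (fun t => sum_f_R0 (fun k => F k t) n) (F (S n))); auto.
Qed.

Lemma is_derive_poly (c : nat -> R) (a : R) (n : nat) (x : R) :
  is_derive (fun t => sum_f_R0 (fun k => c k * (t - a) ^ k) n) x
    (sum_f_R0 (fun k => c k * (INR k * (x - a) ^ pred k)) n).
Proof.
  induction n as [|n IH]; simpl sum_f_R0.
  - simpl; auto_derive; auto; ring.
  - apply (is_derive_plus _ (fun t => c (S n) * (t - a) ^ S n)); [exact IH|].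
    auto_derive; auto; unfold Rminus; rewrite Rmult_1_l; reflexivity.
Qed.

Lemma ex_derive_taylor (m : nat) (f : R -> R) (a x : R) :
  ex_derive (taylor m f a) x.
Proof. eexists; apply is_derive_poly. Qed.

Lemma continuous_Derive_taylor (m : nat) (f : R -> R) (a x : R) :
  continuous (Derive (taylor m f a)) x.
Proof.
  set (c := fun k => Derive_n f k a / INR (Factorial.fact k)).
  apply (continuous_ext
           (fun t => sum_f_R0 (fun k => c k * (INR k * (t - a) ^ pred k)) m)).
  - intros t; symmetry; apply is_derive_unique, (is_derive_poly c).
  - apply (continuous_sum_f_R0 (fun k t => c k * (INR k * (t - a) ^ pred k))).
    intros k; apply (ex_derive_continuous (fun t => c k * (INR k * (t - a) ^ pred k))).
    auto_derive; auto.
Qed.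

Lemma RInt_area_const_shift (P Q : R -> R) (x0 y0 a b : R) :
  (forall x, ex_derive P x) -> (forall x, ex_derive Q x) ->
  (forall x, continuous (Derive P) x) -> (forall x, continuous (Derive Q) x) ->
  RInt (fun x => Derive P x * (y0 + Q x) - Derive Q x * (x0 + P x)) a b
  = RInt (fun x => Derive P x * Q x - Derive Q x * P x) a b
    + (y0 * (P b - P a) - x0 * (Q b - Q a)).
Proof.
  intros P_derivable Q_derivable P'_continuous Q'_continuous.
  assert (HP : forall x, continuous P x)
    by (intros; apply (ex_derive_continuous P); auto).
  assert (HQ : forall x, continuous Q x)
    by (intros; apply (ex_derive_continuous Q); auto).
  apply is_RInt_unique.
  apply (is_RInt_ext (fun x => plus (Derive P x * Q x - Derive Q x * P x)
                         (minus (scal y0 (Derive P x)) (scal x0 (Derive Q x))))).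
  { intros x _; unfold plus, minus, scal, opp; simpl.
    unfold mult, plus, opp; simpl; ring. }
  apply (@is_RInt_plus R_NormedModule).
  - apply (@RInt_correct R_CompleteNormedModule),
      (@ex_RInt_continuous R_CompleteNormedModule); intros x _.
    apply (continuous_minus (fun x => Derive P x * Q x)
                            (fun x => Derive Q x * P x));
      apply (continuous_mult (Derive _)); auto.
  - apply (@is_RInt_minus R_NormedModule); apply (@is_RInt_scal R_NormedModule);
      apply (@is_RInt_derive R_CompleteNormedModule); intros; auto;
      apply Derive_correct; auto.
Qed.

Lemma cx_htranslate (p : R * R * R) (gamma : R -> R * R * R) :
  cx (htranslate p gamma) = fun t => fst (fst p) + cx gamma t.
Proof.
  apply functional_extensionality; intros t; unfold cx, htranslate, hmul.
  destruct p as [[x y] z]; destruct (gamma t) as [[u v] w]; reflexivity.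
Qed.

Lemma cy_htranslate (p : R * R * R) (gamma : R -> R * R * R) :
  cy (htranslate p gamma) = fun t => snd (fst p) + cy gamma t.
Proof.
  apply functional_extensionality; intros t; unfold cy, htranslate, hmul.
  destruct p as [[x y] z]; destruct (gamma t) as [[u v] w]; reflexivity.
Qed.

Lemma cz_htranslate (p : R * R * R) (gamma : R -> R * R * R) (t : R) :
  cz (htranslate p gamma) t =
  snd p + cz gamma t + 2 * (snd (fst p) * cx gamma t - fst (fst p) * cy gamma t).
Proof.
  unfold cz, cx, cy, htranslate, hmul.
  destruct p as [[x y] z]; destruct (gamma t) as [[u v] w]; reflexivity.
Qed.

Theorem lemma3p3 (m : nat) (Hm : (0 < m)%nat) (gamma : R -> R * R * R)
  (Hgamma : Cm_curve m gamma) (p : R * R * R) (a b : R) :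
  Aq m (htranslate p gamma) a b = Aq m gamma a b /\
  Vq m (htranslate p gamma) a b = Vq m gamma a b.
Proof.
  unfold Aq, Vq; cbv zeta.
  rewrite cx_htranslate, cy_htranslate, !taylor_const_plus, !Derive_const_plus.
  split; [|reflexivity].
  rewrite !cz_htranslate, RInt_area_const_shift, !taylor_center;
    auto using ex_derive_taylor, continuous_Derive_taylor.
  ring.
Qed.
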